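(* Let $X$ be a Banach space and $C>0$. The following assertions are equivalent. (1) For every Banach space $Y$ and every bounded linear operator $T\colon X\to Y$, $\omega(T^* )\leq C\cdot\operatorname{uc}(T)$. (2) For every bounded set $K\subset X^*$, $\omega(K)\leq C\cdot\eta(K)$.
   Context: Scalars may be real or complex. For a bounded sequence $(y_n)$ in a Banach space, $\operatorname{ca}((y_n))=\inf_{n\in\mathbb N}\sup\{\|y_k-y_l\|: k,l\geq n\}$. For a bounded linear operator $T\colon X\to Y$, $$\operatorname{uc}(T)=\sup\Big\{\operatorname{ca}\Big(\big(\textstyle\sum_{i=1}^n Tx_i\big)_n\Big):\ (x_n)\subset X,\ \sup_{x^*\in B_{X^*}}\sum_{n=1}^\infty|x^*(x_n)|\leq 1\Big\}.$$ For a bounded subset $A$ of a Banach space $E$, the de Blasi measure is $\omega(A)=\inf\{\sup_{a\in A}\operatorname{dist}(a,K): \emptyset\neq K\subset E \text{ weakly compact}\}$. For $T^*\colon Y^*\to X^*$, $\omega(T^* )=\omega(T^*(B_{Y^*}))$ computed in $X^*$. For a bounded $K\subset X^*$, $$\eta(K)=\sup\Big\{\limsup_n\sup_{x^*\in K}|x^*(x_n)|:\ (x_n)\subset X,\ \sup_{x^*\in B_{X^*}}\sum_{n=1}^\infty|x^*(x_n)|\leq 1\Big\},$$ and $\omega(K)$ is computed in $X^*$. *)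

From HB Require Import structures.
From mathcomp Require Import all_boot all_algebra.
From mathcomp Require Import all_classical all_reals all_analysis.
From mathcomp.real_closed Require Export complex.
Export Num.Theory GRing.Theory.
Export numFieldNormedType.Exports.

Set Implicit Arguments.
Unset Strict Implicit.
Unset Printing Implicit Defensive.

Local Open Scope classical_set_scope.
Local Open Scope ring_scope.

(* Scalars: K is the scalar field (R itself for real scalars, R[i] for complex
   scalars).  Norms and absolute values in K are real numbers lying in K;
   rv : K -> R reads such a real element of K as an element of R
   (rv = id for K = R, rv = complex.Re for K = R[i]). *)
Section Measures.
Context (R : realType) (K : numFieldType) (rv : K -> R).

Section Dual.
Context (X : normedModType K).

Definition dual_elt (f : X -> K) : Prop :=
  (forall (a : K) (x y : X), f (a *: x + y) = a * f x + f y) /\ continuous f.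

Definition dnorm (f : X -> K) : R :=
  sup [set rv `|f x| | x in [set x : X | `|x| <= 1]].

Definition dual_ball : set (X -> K) :=
  [set f | dual_elt f /\ dnorm f <= 1].

Definition dual_bounded (A : set (X -> K)) : Prop :=
  A `<=` dual_elt /\ exists M : R, forall f, A f -> dnorm f <= M.

Definition bidual_elt (phi : (X -> K) -> K) : Prop :=
  (forall (a : K) (f g : X -> K), dual_elt f -> dual_elt g ->
      phi (fun x => a * f x + g x) = a * phi f + phi g) /\
  exists M : R, forall f, dual_elt f -> rv `|phi f| <= M * dnorm f.

(* W is a weakly compact subset of X', i.e. compact for sigma(X', X''):
   every proper filter containing W has a cluster point in W for the weak
   topology (whose basic neighbourhoods of a are given by finitely many
   elements of X'' and an epsilon). *)
Definition weakly_compact (W : set (X -> K)) : Prop :=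
  W `<=` dual_elt /\
  forall F : set_system (X -> K), ProperFilter F -> F W ->
    exists2 a, W a &
      forall (phis : seq ((X -> K) -> K)) (eps : R), 0 < eps ->
        (forall phi, phi \in phis -> bidual_elt phi) ->
        forall S, F S ->
          exists g, [/\ S g, W g &
            forall phi, phi \in phis -> rv `|phi g - phi a| < eps].

Definition dual_dist (a : X -> K) (W : set (X -> K)) : \bar R :=
  ereal_inf [set (dnorm (fun x => a x - k x))%:E | k in W].

Definition omega (A : set (X -> K)) : \bar R :=
  ereal_inf [set ereal_sup [set dual_dist a W | a in A]
            | W in [set W | W !=set0 /\ weakly_compact W]].

Definition wuc1 (x : nat -> X) : Prop :=
  (ereal_sup [set (\sum_(0 <= n <oo) ((rv `|f (x n)|)%:E))%E
             | f in dual_ball] <= 1%:E)%E.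

Definition eta (W : set (X -> K)) : \bar R :=
  ereal_sup [set limn_esup (fun n => ereal_sup [set (rv `|f (x n)|)%:E | f in W])
            | x in wuc1].

End Dual.

Definition ca (Y : normedModType K) (y : nat -> Y) : \bar R :=
  ereal_inf [set ereal_sup [set (rv `|y kl.1 - y kl.2|)%:E
                           | kl in [set kl : nat * nat | (n <= kl.1)%N /\ (n <= kl.2)%N]]
            | n in [set: nat]].

(* uc(T); the n-th partial sum sum_{i=1}^n T x_i is \sum_(i < n.+1) T (x i)
   with 0-based indexing of the sequence *)
Definition uc (X Y : normedModType K) (T : X -> Y) : \bar R :=
  ereal_sup [set ca (fun n => \sum_(i < n.+1) T (x i)) | x in @wuc1 X].

Definition adj_ball (X Y : normedModType K) (T : X -> Y) : set (X -> K) :=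
  [set (fun x => g (T x)) | g in @dual_ball Y].

Definition omega_adj (X Y : normedModType K) (T : X -> Y) : \bar R :=
  omega (adj_ball T).

Definition prop3p4_equiv (X : completeNormedModType K) (C : R) : Prop :=
  (forall (Y : completeNormedModType K) (T : {linear X -> Y}),
      continuous T -> (omega_adj T <= C%:E * uc T)%E)
  <->
  (forall W : set (X -> K), dual_bounded W -> (omega W <= C%:E * eta W)%E).

End Measures.

From Pilot Require Import Defs.
From HB Require Import structures.
From mathcomp Require Import all_boot all_order all_algebra.
From mathcomp Require Import all_classical all_reals all_analysis.
From mathcomp.real_closed Require Import complex.
Import Order.TTheory GRing.Theory Num.Theory.
Local Open Scope classical_set_scope.
Local Open Scope ring_scope.
Set Implicit Arguments.
Unset Strict Implicit.
Unset Printing Implicit Defensive.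

(* (2) => (1): for a bounded T : X -> Y the set T'(B_Y') is bounded
   in X', and eta(T'(B_Y')) <= uc(T) because T x_n is the difference of two
   consecutive partial sums of (T x_n).
   (1) => (2): a nonempty bounded W in X' gives the bounded operator
   T x = (f x)_(f in W) from X into the Banach space l_oo(W).  The coordinate
   functionals lie in B_(l_oo(W)'), so W is contained in T'(B_(l_oo(W)')) and
   omega(W) <= omega(T') <= C uc(T).  Finally uc(T) <= eta(W): if the partial
   sums of (T x_n) oscillate by more than r beyond every index, one picks
   consecutive disjoint blocks of (x_n) whose sums u_j satisfy ||T u_j|| > r;
   the sequence (u_j) is again admissible in the definition of eta, so
   eta(W) >= r.  The empty W is trivial since omega(empty) = -oo. *)

(* K is R (rv = emb = id) or R[i] (rv = Re, emb = real_complex); rv is only ever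
   applied to nonnegative elements of K, where it inverts emb. *)
Section Scalars.
Context (R : realType) (K : numFieldType) (rv : K -> R) (emb : {rmorphism R -> K}).
Hypothesis ler_emb : forall r s : R, (emb r <= emb s) = (r <= s).
Hypothesis embK : cancel emb rv.
Hypothesis rvK : forall k : K, 0 <= k -> emb (rv k) = k.

Lemma emb_ge0 (r : R) : (0 <= emb r) = (0 <= r).
Proof. by rewrite -(rmorph0 emb) ler_emb. Qed.

Lemma ler_rv (x y : K) : 0 <= x -> x <= y -> rv x <= rv y.
Proof. by move=> x0 xy; rewrite -ler_emb !rvK // (le_trans x0). Qed.

Lemma rv_ge0 (x : K) : 0 <= x -> 0 <= rv x.
Proof. by move=> x0; rewrite -emb_ge0 rvK. Qed.

Lemma rv0 : rv 0 = 0.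
Proof. by rewrite -(rmorph0 emb) embK. Qed.

Lemma rvD (x y : K) : 0 <= x -> 0 <= y -> rv (x + y) = rv x + rv y.
Proof. by move=> x0 y0; rewrite -{1}(rvK x0) -{1}(rvK y0) -rmorphD embK. Qed.

Lemma rvM (x y : K) : 0 <= x -> 0 <= y -> rv (x * y) = rv x * rv y.
Proof. by move=> x0 y0; rewrite -{1}(rvK x0) -{1}(rvK y0) -rmorphM embK. Qed.

Definition rnorm (V : normedModType K) (x : V) : R := rv `|x|.

Section RealNorm.
Context (V : normedModType K).
Implicit Types x y : V.

Lemma rnorm_ge0 x : 0 <= rnorm x.
Proof. exact: rv_ge0. Qed.

Lemma rnormK x : emb (rnorm x) = `|x|.
Proof. exact: rvK. Qed.

Lemma ler_rnormD x y : rnorm (x + y) <= rnorm x + rnorm y.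
Proof. by rewrite /rnorm -rvD // ler_rv // ler_normD. Qed.

Lemma rnormN x : rnorm (- x) = rnorm x.
Proof. by rewrite /rnorm normrN. Qed.

Lemma rnormZ (a : K) x : rnorm (a *: x) = rv `|a| * rnorm x.
Proof. by rewrite /rnorm normrZ rvM. Qed.

Lemma rnorm0 : rnorm (0 : V) = 0.
Proof. by rewrite /rnorm normr0 rv0. Qed.

Lemma rnorm_le1 x : (rnorm x <= 1) = (`|x| <= 1).
Proof. by rewrite -ler_emb rnormK rmorph1. Qed.

Lemma ler_rnorm_sum (J : Type) (r : seq J) (P : pred J) (F : J -> V) :
  rnorm (\sum_(j <- r | P j) F j) <= \sum_(j <- r | P j) rnorm (F j).
Proof.
elim/big_rec2: _ => [|j y v _ yv]; first by rewrite rnorm0.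
by rewrite (le_trans (ler_rnormD _ _)) // lerD2l.
Qed.

End RealNorm.

Lemma continuous_linear_rnormP (V W : normedModType K) (f : {linear V -> W}) :
  continuous f <-> exists M : R, forall x, rnorm (f x) <= M * rnorm x.
Proof.
rewrite -linear_bounded_continuous linear_boundedP; split.
  move=> /pinfty_ex_gt0 [r r0 fr]; exists (rv r) => x.
  by rewrite /rnorm -rvM ?(ltW r0) //; apply: ler_rv.
move=> [M fM]; near=> r => x.
rewrite -rnormK (le_trans (_ : _ <= emb (`|M| * rnorm x))) //.
  by rewrite ler_emb (le_trans (fM x)) // ler_wpM2r ?rnorm_ge0 ?ler_norm.
rewrite rmorphM rnormK ler_wpM2r //; near: r; apply: nbhs_pinfty_ge.
by rewrite ger0_real // emb_ge0.
Unshelve. all: by end_near. Qed.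

(** * Dual norm *)

Section Dual.
Context (X : normedModType K).
Implicit Types (f : X -> K) (x y : X).

Let linear_of f (lf : linear (f : X -> K^o)) : {linear X -> K^o} :=
  HB.pack (f : X -> K^o) (GRing.isLinear.Build K X K^o *:%R f lf).

Lemma dual_eltP f : linear (f : X -> K^o) ->
  dual_elt f <-> exists M : R, forall x, rv `|f x| <= M * rnorm x.
Proof.
move=> lf; rewrite -(continuous_linear_rnormP (linear_of lf)).
by split => [[]|] //; split.
Qed.

Section DualElt.
Context (f : X -> K) (df : dual_elt f).
Let lf : {linear X -> K^o} := linear_of df.1.

Lemma dual0 : f 0 = 0.
Proof. exact: (linear0 lf). Qed.

Lemma dualD x y : f (x + y) = f x + f y.
Proof. exact: (linearD lf). Qed.

Lemma dualZ (a : K) x : f (a *: x) = a * f x.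
Proof. exact: (linearZ_LR lf). Qed.

Lemma dual_sum (y : nat -> X) m n :
  f (\sum_(m <= i < n) y i) = \sum_(m <= i < n) f (y i).
Proof. exact: (linear_sum lf). Qed.

Let dual_values := [set rv `|f x| | x in [set x : X | `|x| <= 1]].

Let has_ubound_dual_values : has_ubound dual_values.
Proof.
have [M fM] := (dual_eltP df.1).1 df.
exists `|M| => _ [x /= x1 <-]; apply: le_trans (fM x) _.
by rewrite (le_trans (ler_wpM2r (rnorm_ge0 _) (ler_norm M))) // ler_piMr // rnorm_le1.
Qed.

Lemma dnorm_ub x : rv `|f x| <= dnorm rv f * rnorm x.
Proof.
have [->|x0] := eqVneq x 0; first by rewrite dual0 normr0 rv0 rnorm0 mulr0.
have fx : f x = `|x| * f (`|x|^-1 *: x).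
  by rewrite dualZ mulrA mulfV ?normr_eq0 // mul1r.
rewrite fx normrM normr_id rvM // mulrC ler_wpM2r ?rnorm_ge0 //.
by apply: (ub_le_sup has_ubound_dual_values); exists (`|x|^-1 *: x); rewrite //= normfZV.
Qed.

End DualElt.

Lemma dnorm_le f (M : R) :
  0 <= M -> (forall x, rv `|f x| <= M * rnorm x) -> dnorm rv f <= M.
Proof.
move=> M0 fM; apply: ge_sup; first by exists (rv `|f 0|), 0; rewrite //= normr0.
by move=> _ [x /= x1 <-]; rewrite (le_trans (fM x)) // ler_piMr // rnorm_le1.
Qed.

End Dual.

Lemma limn_esup_le_esups (u : (\bar R)^nat) m : (limn_esup u <= esups u m)%E.
Proof.
by apply: ereal_inf_lbound; exists [set n | (m <= n)%N] => //; exact: nbhs_infty_ge.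
Qed.

Lemma limn_esup_ge (u : (\bar R)^nat) (r : \bar R) :
  (forall n, r <= u n)%E -> (r <= limn_esup u)%E.
Proof.
move=> ru; apply/ereal_infP => _ [V [N _ NV] <-].
by apply: le_trans (ru N) _; apply: ereal_sup_ubound; exists N => //; exact: NV (leqnn N).
Qed.

Lemma lee_fin_lt_le (a b : \bar R) : (forall r : R, r%:E < a -> r%:E <= b)%E -> (a <= b)%E.
Proof.
case: a => [a| |] ab; last exact: leNye.
- case: b ab => [b| |] ab; [|exact: leey|].
  + rewrite lee_fin; apply/ler_addgt0Pr => e e0.
    by rewrite -lerBlDr -lee_fin ab // lte_fin ltrBlDr ltrDl.
  + by have := ab (a - 1); rewrite lte_fin ltrBlDr ltrDl ltr01 => /(_ isT).
- case: b ab => [b| |] ab; [|exact: leey|].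
  + by have := ab (b + 1); rewrite ltey lee_fin gerDl ler10 => /(_ isT).
  + by have := ab 0; rewrite ltey => /(_ isT).
Qed.

Section Omega.
Context (X : normedModType K).

Lemma le_omega (A B : set (X -> K)) : A `<=` B -> (omega rv A <= omega rv B)%E.
Proof.
move=> AB; apply/ereal_infP => _ [V wcV <-].
apply: le_trans (ereal_inf_lbound (ex_intro2 _ _ V wcV erefl)) _.
by apply: ereal_sup_le => _ [a Aa <-]; exists a => //; exact: AB.
Qed.

Lemma dual_elt0 : dual_elt (fun _ : X => 0 : K).
Proof. by split => [a x y|x]; [rewrite mulr0 addr0 | exact: cst_continuous]. Qed.

Lemma weakly_compact0 : weakly_compact rv [set (fun _ : X => 0 : K)].
Proof.
split=> [_ ->|F PF F0]; first exact: dual_elt0.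
exists (fun _ => 0) => // phis eps eps0 _ S FS.
have [g [Sg g0]] := filter_ex (filterI FS F0).
by exists g; split=> // phi _; rewrite -g0 subrr normr0 rv0.
Qed.

Lemma omega_set0 : omega rv (@set0 (X -> K)) = -oo%E.
Proof.
apply/eqP; rewrite eq_le leNye andbT.
have wc0 : [set V | V !=set0 /\ weakly_compact rv V] [set (fun _ : X => 0 : K)].
  by split; [exists (fun _ => 0) | exact: weakly_compact0].
apply: le_trans (ereal_inf_lbound (ex_intro2 _ _ _ wc0 erefl)) _.
by rewrite image_set0 ereal_sup0.
Qed.

End Omega.

Section AdjointBall.
Context (X Y : normedModType K) (T : {linear X -> Y}).
Hypothesis cT : continuous T.

Lemma dual_elt_comp (g : Y -> K) : dual_elt g -> dual_elt (fun x => g (T x)).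
Proof.
move=> dg; split=> [a x y|x]; first by rewrite linearP dualD // dualZ.
by apply: continuous_comp; [exact: cT | exact: dg.2].
Qed.

Lemma dual_bounded_adj_ball : dual_bounded rv (adj_ball rv T).
Proof.
have [M TM] := (continuous_linear_rnormP T).1 cT.
split=> [_ [g [dg _] <-]|]; first exact: dual_elt_comp.
exists `|M| => _ [g [dg g1] <-]; apply: dnorm_le => // x.
apply: le_trans (dnorm_ub dg _) _.
rewrite (le_trans (ler_wpM2r (rnorm_ge0 _) g1)) // mul1r (le_trans (TM x)) //.
by rewrite ler_wpM2r ?rnorm_ge0 ?ler_norm.
Qed.

Lemma eta_adj_ball_le_uc : (Defs.eta rv (adj_ball rv T) <= uc rv T)%E.
Proof.
apply: ge_ereal_sup => _ [x wx <-].
apply: le_trans (ereal_sup_ubound (ex_intro2 _ _ x wx erefl)).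
apply/ereal_infP => _ [m _ <-]; apply: le_trans (limn_esup_le_esups _ m.+1) _.
apply: ge_ereal_sup => _ [n /= mn <-]; apply: ge_ereal_sup => _ [_ [g [dg g1] <-] <-].
have n0 : (0 < n)%N by exact: leq_trans mn.
have mn1 : (m <= n.-1)%N by rewrite -ltnS prednK.
apply: le_trans (ereal_sup_ubound (ex_intro2 _ _ (n, n.-1) (conj (ltnW mn) mn1) erefl)).
rewrite lee_fin /=.
have -> : \sum_(i < n.+1) T (x i) - \sum_(i < n.-1.+1) T (x i) = T (x n).
  by rewrite prednK // big_ord_recr /= addrC addrK.
apply: le_trans (dnorm_ub dg _) _.
by rewrite -[leRHS]mul1r ler_wpM2r ?rnorm_ge0.
Qed.

End AdjointBall.

Lemma omega_adj_le_of_eta (X : normedModType K) (C : R) : 0 < C ->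
  (forall W : set (X -> K), dual_bounded rv W -> (omega rv W <= C%:E * Defs.eta rv W)%E) ->
  forall (Y : normedModType K) (T : {linear X -> Y}), continuous T ->
    (omega_adj rv T <= C%:E * uc rv T)%E.
Proof.
move=> C0 omega_eta Y T cT.
apply: le_trans (omega_eta _ (dual_bounded_adj_ball cT)) _.
by rewrite lee_pmul2l ?lte_fin // eta_adj_ball_le_uc.
Qed.

(** * The space l_oo(I) *)

Lemma ler_dist_lim {T : Type} (F : set_system T) {PF : ProperFilter F}
    (V : normedModType K) (u : T -> V) (l c : V) (e : K) :
  u @ F --> l -> (\forall t \near F, `|c - u t| <= e) -> `|c - l| <= e.
Proof.
move=> ul ce; apply/ler_addgt0Pr => d d0.
have [t /= [cte ltd]] := filter_ex (filterI ce (cvgr_dist_lt _ _ ul _ d0)).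
by rewrite (le_trans (ler_distD (u t) _ _)) // lerD // distrC ltW.
Qed.

Hypothesis K_complete : forall F : set_system K, ProperFilter F -> cauchy F -> cvg F.

Section Linfty.
Context (I : Type).

Definition linfty_bounded : {pred I -> K^o} :=
  fun f => `[< exists M : R, forall i, rnorm (f i) <= M >].

Lemma linfty_bounded_submod_closed : GRing.submod_closed linfty_bounded.
Proof.
split=> [|a f g /asboolP[Mf fMf] /asboolP[Mg gMg]]; apply/asboolP.
  by exists 0 => i; rewrite rnorm0.
exists (rv `|a| * Mf + Mg) => i; rewrite (le_trans (ler_rnormD _ _)) // lerD //.
by rewrite rnormZ ler_wpM2l ?rv_ge0.
Qed.

HB.instance Definition _ := GRing.isSubmodClosed.Build K (I -> K^o) linfty_bounded
  linfty_bounded_submod_closed.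

Record linfty := Linfty { linfty_fun :> I -> K^o; _ : linfty_fun \in linfty_bounded }.

HB.instance Definition _ := [isSub for linfty_fun].
HB.instance Definition _ := [Choice of linfty by <:].
HB.instance Definition _ := [SubChoice_isSubLmodule of linfty by <:].

(* 0 is added so that the sup norm is also correct for empty I. *)
Let linfty_values (f : linfty) := [set 0] `|` range (fun i => rnorm (f i)).

Definition linfty_sup (f : linfty) : R := sup (linfty_values f).

Let has_ubound_linfty_values f : has_ubound (linfty_values f).
Proof.
have /asboolP[M fM] := valP f; exists (Num.max 0 M) => _ [->|[i _ <-]].
  by rewrite le_max lexx.
by rewrite le_max fM orbT.
Qed.

Let linfty_values_neq0 f : linfty_values f !=set0.
Proof. by exists 0; left. Qed.

Lemma linfty_sup_ub (f : linfty) i : rnorm (f i) <= linfty_sup f.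
Proof. by apply: (ub_le_sup (has_ubound_linfty_values f)); right; exists i. Qed.

Lemma linfty_sup_ge0 (f : linfty) : 0 <= linfty_sup f.
Proof. by apply: (ub_le_sup (has_ubound_linfty_values f)); left. Qed.

Lemma linfty_sup_le (f : linfty) (M : R) :
  0 <= M -> (forall i, rnorm (f i) <= M) -> linfty_sup f <= M.
Proof. by move=> M0 fM; apply: ge_sup => // _ [->|[i _ <-]]. Qed.

Lemma linfty_sup_gt (f : linfty) (r : R) :
  0 <= r -> r < linfty_sup f -> exists i, r < rnorm (f i).
Proof.
move=> r0 /(sup_gt (linfty_values_neq0 f)) [_ [->|[i _ <-]] rlt]; last by exists i.
by move: (le_lt_trans r0 rlt); rewrite ltxx.
Qed.

Definition linfty_norm (f : linfty) : K := emb (linfty_sup f).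

Lemma linfty_norm_coord (f : linfty) i : `|f i| <= linfty_norm f.
Proof. by rewrite -[`|f i|]rnormK ler_emb linfty_sup_ub. Qed.

Lemma linfty_norm_le (f : linfty) (c : K) :
  0 <= c -> (forall i, `|f i| <= c) -> linfty_norm f <= c.
Proof.
move=> c0 fc; rewrite -(rvK c0) ler_emb linfty_sup_le ?rv_ge0 // => i.
exact: ler_rv.
Qed.

Lemma linfty_norm_ge0 (f : linfty) : 0 <= linfty_norm f.
Proof. by rewrite emb_ge0 linfty_sup_ge0. Qed.

Lemma linfty_normD (f g : linfty) : linfty_norm (f + g) <= linfty_norm f + linfty_norm g.
Proof.
apply: linfty_norm_le => [|i]; first by rewrite addr_ge0 ?linfty_norm_ge0.
by rewrite (le_trans (ler_normD _ _)) // lerD ?linfty_norm_coord.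
Qed.

Lemma linfty_normZ (a : K) (f : linfty) : linfty_norm (a *: f) = `|a| * linfty_norm f.
Proof.
have normZ_le b (g : linfty) : linfty_norm (b *: g) <= `|b| * linfty_norm g.
  apply: linfty_norm_le => [|i]; first by rewrite mulr_ge0 ?linfty_norm_ge0.
  by rewrite [`|_|]normrM ler_wpM2l ?linfty_norm_coord.
apply/eqP; rewrite eq_le normZ_le /=.
have [->|a0] := eqVneq a 0; first by rewrite normr0 mul0r linfty_norm_ge0.
rewrite -ler_pdivlMl ?normr_gt0 // -normrV ?unitfE //.
by rewrite (le_trans _ (normZ_le _ _)) // scalerA mulVf // scale1r.
Qed.

Lemma linfty_norm_eq0 (f : linfty) : linfty_norm f = 0 -> f = 0.
Proof.
move=> f0; apply: val_inj; apply/funext => i /=; apply/normr0_eq0/eqP.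
by rewrite eq_le normr_ge0 andbT -f0 linfty_norm_coord.
Qed.

HB.instance Definition _ :=
  Lmodule_isNormed.Build K linfty linfty_normD linfty_normZ linfty_norm_eq0.

Lemma rnorm_linfty (f : linfty) : rnorm f = linfty_sup f.
Proof. exact: embK. Qed.

Lemma linfty_coord_dual_ball i : dual_ball rv (fun f : linfty => f i).
Proof.
have coord_le (f : linfty) : rv `|f i| <= 1 * rnorm f.
  by rewrite mul1r rnorm_linfty linfty_sup_ub.
have lin : linear ((fun f : linfty => f i) : linfty -> K^o) by [].
have dc : dual_elt (fun f : linfty => f i) by apply/(dual_eltP lin); exists 1.
by split=> //; apply: dnorm_le.
Qed.

Lemma linfty_cauchy_cvg (F : set_system linfty) : ProperFilter F -> cauchy F -> cvg F.
Proof.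
move=> PF /cauchyP cF.
have coord_cvg i : cvg ((fun f : linfty => f i) @ F).
  apply: K_complete; apply/cauchyP => e e0; have [f Ff] := cF e e0.
  exists (f i); apply: (@filterS _ _ _ (ball f e)) Ff => g; rewrite -!ball_normE /=.
  by move=> /(le_lt_trans (linfty_norm_coord (f - g) i)).
pose l i := lim ((fun f : linfty => f i) @ F).
have near_l f e i : F (ball f e) -> `|f i - l i| <= e.
  move=> Ff; apply: ler_dist_lim (coord_cvg i) _; apply: filterS Ff => g.
  by rewrite -ball_normE /= => /ltW /(le_trans (linfty_norm_coord (f - g) i)).
have l_bounded : (l : I -> K^o) \in linfty_bounded.
  have [f Ff] := cF 1 ltr01; apply/asboolP; exists (rnorm f + 1) => i.
  rewrite -[l i](subKr (f i)) (le_trans (ler_rnormD _ _)) // rnormN lerD //.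
    by rewrite rnorm_linfty linfty_sup_ub.
  by rewrite rnorm_le1 near_l.
apply/cvg_ex; exists (Linfty l_bounded); apply/cvg_ballP => e e0.
have e20 : 0 < e / 2 by rewrite divr_gt0.
have [f Ff] := cF _ e20; have fl i := near_l f _ i Ff.
apply: filterS Ff => g; rewrite -!ball_normE /= => fg.
apply: le_lt_trans (_ : _ <= e / 2 + `|f - g|) _; last by rewrite {2}(splitr e) ltrD2l.
apply: linfty_norm_le => [|i /=]; first by rewrite addr_ge0 // ltW.
rewrite (le_trans (ler_distD (f i) _ _)) // lerD //; first by rewrite distrC fl.
exact: (linfty_norm_coord (f - g)).
Qed.

HB.instance Definition _ := Uniform_isComplete.Build linfty linfty_cauchy_cvg.

End Linfty.

(** * Block sums of weakly unconditionally Cauchy sequences *)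

Lemma sum_ord_sub (V : zmodType) (F : nat -> V) m n : (m <= n)%N ->
  \sum_(i < n) F i - \sum_(i < m) F i = \sum_(m <= i < n) F i.
Proof.
by move=> mn; rewrite -!(big_mkord xpredT) (big_cat_nat (leq0n m) mn) /= addrAC subrr add0r.
Qed.

Lemma sum_blocks_le (c : nat -> R) (a b : nat -> nat) :
  (forall i, 0 <= c i) -> (forall j, a j <= b j <= a j.+1)%N ->
  forall J, \sum_(j < J) \sum_(a j <= i < b j) c i <= \sum_(0 <= i < a J) c i.
Proof.
move=> c0 ab; elim=> [|J IH]; first by rewrite big_ord0 sumr_ge0.
have /andP[aJ bJ] := ab J.
rewrite big_ord_recr /= (le_trans (lerD IH (lexx _))) //.
rewrite -(big_cat_nat (leq0n _) aJ) /= [leRHS](big_cat_nat (leq0n _) bJ) /=.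
by rewrite lerDl sumr_ge0.
Qed.

Section Wuc.
Context (X : normedModType K).

Lemma wuc1_blocks (x : nat -> X) (a b : nat -> nat) :
  wuc1 rv x -> (forall j, a j <= b j <= a j.+1)%N ->
  wuc1 rv (fun j => \sum_(a j <= i < b j) x i).
Proof.
move=> wx ab; apply: ge_ereal_sup => _ [f [df f1] <-].
have fx : (\sum_(0 <= i <oo) (rv `|f (x i)|)%:E <= 1)%E.
  by apply: le_trans wx; apply: ereal_sup_ubound; exists f.
apply: le_trans fx; apply: lime_le.
  by apply: is_cvg_nneseries => n _ _; rewrite lee_fin rv_ge0.
apply: nearW => J; rewrite /= sumEFin big_mkord.
apply: (@le_trans _ _ (\sum_(0 <= i < a J) rv `|f (x i)|)%:E).
  rewrite lee_fin (le_trans _ (sum_blocks_le _ ab J)) // => [|i]; last exact: rv_ge0.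
  apply: ler_sum => j _; rewrite (dual_sum df).
  exact: (ler_rnorm_sum _ _ (fun i => f (x i) : K^o)).
rewrite -sumEFin.
by apply: nneseries_lim_ge => n _ _; rewrite lee_fin rv_ge0.
Qed.

Lemma eta_ge0 (W : set (X -> K)) : W !=set0 -> (0 <= Defs.eta rv W)%E.
Proof.
move=> [f Wf].
have w0 : wuc1 rv (fun _ : nat => (0 : X)).
  apply: ge_ereal_sup => _ [g [dg _] <-].
  by rewrite eseries0 // => i _ _; rewrite (dual0 dg) normr0 rv0.
apply: le_trans (ereal_sup_ubound (ex_intro2 _ _ _ w0 erefl)).
apply: limn_esup_ge => n.
apply: le_trans (ereal_sup_ubound (ex_intro2 _ _ f Wf erefl)).
by rewrite lee_fin rv_ge0.
Qed.

End Wuc.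

Lemma ca_gt_blocks (V : normedModType K) (y : nat -> V) (r : R) :
  0 <= r -> (r%:E < ca rv y)%E ->
  exists a b : nat -> nat, forall j,
    [/\ (a j < b j)%N, (b j <= a j.+1)%N & r < rnorm (y (b j) - y (a j))].
Proof.
move=> r0 rca.
have pair_after m : exists kl : nat * nat,
    [/\ (m <= kl.1)%N, (kl.1 < kl.2)%N & r < rnorm (y kl.2 - y kl.1)].
  have : (r%:E < ereal_sup [set (rv `|y kl.1 - y kl.2|)%:E
      | kl in [set kl : nat * nat | (m <= kl.1)%N /\ (m <= kl.2)%N]])%E.
    by apply: lt_le_trans rca _; apply: ereal_inf_lbound; exists m.
  move=> /ereal_sup_gt[_ [[k l] /= [mk ml] <-]]; rewrite lte_fin => rkl.
  have [kl|lk|kl] := ltngtP k l.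
  - by exists (k, l); split => //; rewrite /rnorm distrC.
  - by exists (l, k).
  - by move: rkl; rewrite kl subrr normr0 rv0 ltNge r0.
have [p pP] := choice pair_after.
pose st := fix st j := if j is j'.+1 then (p (st j')).2 else 0%N.
exists (fun j => (p (st j)).1), (fun j => (p (st j)).2) => j.
by have [_ ? ?] := pP (st j); have [? _ _] := pP (st j.+1); split.
Qed.

Section EvaluationEmbedding.
Context (X : normedModType K) (W : set (X -> K)).
Hypothesis Wb : dual_bounded rv W.

Local Notation I := {f : X -> K | W f}.

Lemma dual_bounded_ub :
  exists2 M : R, 0 <= M & forall f x, W f -> rv `|f x| <= M * rnorm x.
Proof.
have [M WM] := Wb.2; exists `|M| => // f x Wf.
rewrite (le_trans (dnorm_ub (Wb.1 f Wf) x)) // ler_wpM2r ?rnorm_ge0 //.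
exact: le_trans (WM f Wf) (ler_norm M).
Qed.

Lemma evaluation_bounded (x : X) : (fun i : I => sval i x : K^o) \in @linfty_bounded I.
Proof.
have [M _ WM] := dual_bounded_ub.
by apply/asboolP; exists (M * rnorm x) => -[f Wf]; exact: WM.
Qed.

Definition evaluation (x : X) : linfty I := Linfty (evaluation_bounded x).

Lemma evaluation_linear : linear evaluation.
Proof.
by move=> a x y; apply: val_inj; apply/funext => -[f Wf] /=; rewrite (Wb.1 f Wf).1.
Qed.

HB.instance Definition _ := GRing.isLinear.Build K X (linfty I) *:%R evaluation
  evaluation_linear.

Lemma evaluation_continuous : continuous evaluation.
Proof.
apply/continuous_linear_rnormP; have [M M0 WM] := dual_bounded_ub.
exists M => x; rewrite rnorm_linfty linfty_sup_le ?mulr_ge0 ?rnorm_ge0 // => -[f Wf].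
exact: WM.
Qed.

Lemma sub_adj_ball_evaluation : W `<=` adj_ball rv evaluation.
Proof.
move=> f Wf; exists (fun g : linfty I => g (exist _ f Wf)) => //.
exact: linfty_coord_dual_ball.
Qed.

Lemma uc_evaluation_le_eta : W !=set0 -> (uc rv evaluation <= Defs.eta rv W)%E.
Proof.
move=> W0; apply: ge_ereal_sup => _ [x wx <-]; apply: lee_fin_lt_le => r rca.
have [r0|r0] := ltP r 0; first by apply: le_trans (eta_ge0 W0); rewrite lee_fin ltW.
have [a [b abr]] := ca_gt_blocks r0 rca.
pose u j := \sum_((a j).+1 <= i < (b j).+1) x i.
have wu : wuc1 rv u.
  by apply: wuc1_blocks => // j; have [/ltnW ab ba _] := abr j; rewrite !ltnS ab.
apply: le_trans (ereal_sup_ubound (ex_intro2 _ _ u wu erefl)).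
apply: limn_esup_ge => j; have [ab _] := abr j.
have -> : \sum_(i < (b j).+1) evaluation (x i) - \sum_(i < (a j).+1) evaluation (x i)
    = evaluation (u j).
  by rewrite (sum_ord_sub (fun i => evaluation (x i)) (leqW ab)) raddf_sum.
rewrite rnorm_linfty => /(linfty_sup_gt r0) [[f Wf] rf].
apply: le_trans (ereal_sup_ubound (ex_intro2 _ _ f Wf erefl)).
by rewrite lee_fin ltW.
Qed.

End EvaluationEmbedding.

Lemma eta_bound_of_omega_adj_bound (X : normedModType K) (C : R) : 0 < C ->
  (forall (Y : completeNormedModType K) (T : {linear X -> Y}), continuous T ->
     (omega_adj rv T <= C%:E * uc rv T)%E) ->
  forall W : set (X -> K), dual_bounded rv W -> (omega rv W <= C%:E * Defs.eta rv W)%E.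
Proof.
move=> C0 omega_uc W Wb.
have [W0|W0] := pselect (W !=set0); last first.
  have -> : W = set0 by apply/seteqP; split => // f Wf; apply: W0; exists f.
  by rewrite omega_set0 leNye.
apply: le_trans (le_omega (sub_adj_ball_evaluation Wb)) _.
apply: le_trans (omega_uc _ _ (@evaluation_continuous _ _ Wb)) _.
by rewrite lee_pmul2l ?lte_fin // uc_evaluation_le_eta.
Qed.

Lemma prop3p4_equiv_holds (X : completeNormedModType K) (C : R) :
  0 < C -> prop3p4_equiv rv X C.
Proof.
move=> C0; split; first exact: eta_bound_of_omega_adj_bound.
by move=> eta_bound Y T; exact: omega_adj_le_of_eta.
Qed.

End Scalars.

(** * Completeness of R[i] *)

Section ComplexCompleteness.
Context (R : realType).
Local Open Scope complex_scope.
Implicit Types (z w : R[i]).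

Lemma ReB z w : complex.Re (z - w) = complex.Re z - complex.Re w.
Proof. exact: (raddfB (@complex.Re R : Rcomplex R -> R)). Qed.

Lemma ImB z w : complex.Im (z - w) = complex.Im z - complex.Im w.
Proof. exact: (raddfB (@complex.Im R : Rcomplex R -> R)). Qed.

Lemma normcR (r : R) : `|r%:C| = `|r|%:C.
Proof. by rewrite normc_def /= expr0n addr0 sqrtr_sqr. Qed.

Lemma normci : `|'i| = 1 :> R[i].
Proof. by rewrite normc_def /= expr0n expr1n add0r sqrtr1. Qed.

Lemma normc_ge_Im z : `|complex.Im z|%:C <= `|z|.
Proof.
rewrite -[complex.Im z]opprK -ReiNIm normrN (le_trans (normc_ge_Re _)) //.
by rewrite normrM normci mulr1.
Qed.

Lemma normc_le_Re_Im z : `|z| <= `|complex.Re z|%:C + `|complex.Im z|%:C.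
Proof.
by rewrite {1}[z]complexE (le_trans (ler_normD _ _)) // normrM normci mul1r !normcR.
Qed.

Lemma complex_cauchy_cvg (F : set_system (R[i] : numFieldType)) :
  ProperFilter F -> cauchy F -> cvg F.
Proof.
move=> PF /cauchyP cF.
have part_cvg (p : R[i] -> R) : (forall z w, `|p z - p w|%:C <= `|z - w|) -> cvg (p @ F).
  move=> p_dist; apply: cauchy_cvg; apply/cauchyP => e e0.
  have [z Fz] := cF e%:C (eqbRL (ltcR _ _) e0).
  exists (p z); apply: (@filterS _ _ _ (ball z e%:C)) Fz => w.
  by rewrite -!ball_normE /= -ltcR; exact: le_lt_trans (p_dist z w).
have /cvg_ex[a Fa] : cvg (@complex.Re R @ F).
  by apply: part_cvg => z w; rewrite -ReB normc_ge_Re.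
have /cvg_ex[b Fb] : cvg (@complex.Im R @ F).
  by apply: part_cvg => z w; rewrite -ImB normc_ge_Im.
apply/cvg_ex; exists (a +i* b); apply/cvgrPdist_lt => e e0.
have e_real : (complex.Re e)%:C = e by apply: RRe_real; exact: gtr0_real.
have e2 : 0 < complex.Re e / 2 by rewrite divr_gt0 // -ltcR e_real.
near=> z; rewrite -e_real (le_lt_trans (normc_le_Re_Im _)) //.
rewrite ReB ImB -(rmorphD (real_complex R)) ltcR [complex.Re e]splitr /= ltrD //.
- by near: z; exact: (cvgr_dist_lt _ _ Fa _ e2).
- by near: z; exact: (cvgr_dist_lt _ _ Fb _ e2).
Unshelve. all: by end_near. Qed.

End ComplexCompleteness.

Theorem proposition3p4 (R : realType) :
  (forall (X : completeNormedModType R) (C : R), 0 < C ->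
      prop3p4_equiv (@id R) X C) /\
  (forall (X : completeNormedModType R[i]) (C : R), 0 < C ->
      prop3p4_equiv (@complex.Re R) X C).
Proof.
split=> X C C0.
- by apply: (@prop3p4_equiv_holds R R id idfun) => // F PF; exact: cauchy_cvg.
- apply: (@prop3p4_equiv_holds R R[i] (@complex.Re R) (real_complex R)) => //.
  + by move=> r s; rewrite lecR.
  + by move=> k k0; apply: RRe_real; exact: ger0_real.
  + exact: complex_cauchy_cvg.
Qed.
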